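(* Let $\Theta=\{x_1,\dots,x_n\}$ be a finite frame of discernment and let $m$ be a basic probability assignment on $\Theta$ whose pignistic probabilities satisfy $\mathrm{BetP}(x)>0$ for every $x\in\Theta$. Fix a nonempty subset $B\subseteq\Theta$ with $|B|=g$. Then $$\sum_{A\in \mathrm{PES}(\Theta):\ \mathrm{Element}(A)=B} \mathrm{Sord}(A)=1,$$ i.e. the ordered support degrees of the $g!$ permutation events that are orderings of the elements of $B$ sum to $1$.
   Context: A basic probability assignment (BPA) on a finite set $\Theta$ is a map $m:2^{\Theta}\to[0,1]$ with $m(\emptyset)=0$ and $\sum_{A\subseteq\Theta}m(A)=1$. Its pignistic probability transformation is $\mathrm{BetP}(x)=\sum_{A\subseteq\Theta,\,x\in A} m(A)/|A|$ for $x\in\Theta$. The permutation event space $\mathrm{PES}(\Theta)$ is the set of all ordered tuples $A=(\beta_1,\dots,\beta_k)$ of distinct elements of $\Theta$, $0\le k\le n$ (permutation events); $|A|=k$ and $\mathrm{Element}(A)=\{\beta_1,\dots,\beta_k\}$ denotes the underlying unordered set. For a nonempty permutation event $A=(\beta_1,\dots,\beta_{|A|})$, its ordered support degree is $$\mathrm{Sord}(A)=\prod_{i=1}^{|A|}\frac{\mathrm{BetP}(\beta_i)}{\sum_{j=i}^{|A|}\mathrm{BetP}(\beta_j)}.$$ *)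

From mathcomp Require Import all_boot all_order all_algebra.
Set Implicit Arguments. Unset Strict Implicit. Unset Printing Implicit Defensive.
Import Order.TTheory GRing.Theory Num.Theory.
Local Open Scope ring_scope.

Definition is_bpa (R : realFieldType) (T : finType) (m : {set T} -> R) : Prop :=
  m set0 = 0 /\ (forall A, 0 <= m A <= 1) /\ \sum_(A : {set T}) m A = 1.

Definition BetP (R : realFieldType) (T : finType) (m : {set T} -> R) (x : T) : R :=
  \sum_(A : {set T} | x \in A) m A / #|A|%:R.

Definition perm_event (T : finType) (s : seq T) : bool := uniq s.

Definition Element (T : finType) (s : seq T) : {set T} := [set x in s].

Definition Sord (R : realFieldType) (T : finType) (m : {set T} -> R) (s : seq T) : R :=
  \prod_(i < size s)
     (BetP m (tnth (in_tuple s) i)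
      / \sum_(j < size s | (i <= j)%N) BetP m (tnth (in_tuple s) j)).

(* Sord(A) is the Plackett–Luce probability of drawing the elements of A one
   after the other, without replacement, each with probability proportional to
   its BetP.  Splitting the orderings of B by their first element x, the
   remaining factors sum to 1 over the orderings of B \ {x} by induction on |B|,
   and the first factors BetP(x) / (sum of BetP over B) sum to 1 over x in B. *)

From mathcomp Require Import all_boot all_order all_algebra.
Set Implicit Arguments. Unset Strict Implicit. Unset Printing Implicit Defensive.
Import Order.TTheory GRing.Theory Num.Theory.
Local Open Scope ring_scope.

Lemma big_tuple_cons (V : Type) (idx : V) (op : Monoid.com_law idx)
    (T : finType) n (P : pred ((n.+1).-tuple T)) (F : (n.+1).-tuple T -> V) :
  \big[op/idx]_(t : (n.+1).-tuple T | P t) F t =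
  \big[op/idx]_(x : T) \big[op/idx]_(t : n.-tuple T | P [tuple of x :: t])
     F [tuple of x :: t].
Proof.
rewrite [RHS]pair_big_dep /=.
rewrite (reindex (fun q : T * n.-tuple T => [tuple of q.1 :: q.2])) /=.
  by apply: eq_bigl => -[x t].
exists (fun t : (n.+1).-tuple T => (thead t, [tuple of behead t])).
  by move=> [x t] _ /=; rewrite theadE; congr pair; apply: val_inj.
by move=> t _ /=; rewrite -tuple_eta.
Qed.

Lemma notin_setU1_eq (T : finType) (x : T) (A S : {set T}) :
  x \in S -> (x \notin A) && (x |: A == S) = (A == S :\ x).
Proof.
move=> xS; apply/andP/eqP => [[xA /eqP <-] | ->]; first by rewrite setU1K.
by rewrite setD11 setD1K.
Qed.

Lemma uniq_cons_set_eq (T : finType) (x : T) (t : seq T) (S : {set T}) :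
  x \in S ->
  uniq (x :: t) && ([set y in x :: t] == S) = uniq t && ([set y in t] == S :\ x).
Proof.
move=> xS; rewrite -(notin_setU1_eq [set y in t] xS) cons_uniq inE -andbA andbCA.
by congr (_ && (_ && _)); congr (_ == _); apply/setP => y; rewrite !inE.
Qed.

Section PlackettLuce.
Variables (R : realFieldType) (T : finType) (p : T -> R).

Fixpoint plackett_luce (s : seq T) : R :=
  if s is x :: s' then p x / (p x + \sum_(y <- s') p y) * plackett_luce s' else 1.

Lemma plackett_luceE (s : seq T) :
  plackett_luce s =
  \prod_(i < size s)
     (p (tnth (in_tuple s) i) / \sum_(j < size s | (i <= j)%N) p (tnth (in_tuple s) j)).
Proof.
elim: s => [|x s IH] /=; first by rewrite big_ord0.
rewrite big_ord_recl IH; congr (_ / _ * _).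
  rewrite big_mkcond big_ord_recl (big_nth x) big_mkord /=; congr (_ + _).
  by apply: eq_bigr => i _; rewrite (tnth_nth x).
apply: eq_bigr => i _; rewrite !(tnth_nth x) /=; congr (_ / _).
rewrite [RHS]big_mkcond big_ord_recl /= add0r [LHS]big_mkcond.
by apply: eq_bigr => j _; rewrite /bump !add1n ltnS !(tnth_nth x).
Qed.

Lemma sum_uniq_set (t : seq T) (A : {set T}) :
  uniq t -> [set y in t] = A -> \sum_(y <- t) p y = \sum_(y in A) p y.
Proof.
by move=> ut tA; rewrite big_uniq //; apply: eq_bigl => y; rewrite -tA inE.
Qed.

Hypothesis p_gt0 : forall x, 0 < p x.

Lemma sum_plackett_luce n (S : {set T}) : #|S| = n ->
  \sum_(t : n.-tuple T | uniq t && ([set y in t] == S)) plackett_luce t = 1.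
Proof.
elim: n S => [|n IH] S cardS.
  have -> : S = set0 by apply/eqP; rewrite -cards_eq0 cardS.
  rewrite (big_pred1 [tuple]) // => t; rewrite tuple0 /=.
  by rewrite [RHS]eqxx; apply/eqP/setP => y; rewrite !inE.
rewrite big_tuple_cons (bigID (mem S)) /= [X in _ + X]big1 ?addr0; last first.
  move=> x xS; apply: big1 => t /andP[_ /eqP tS].
  by move: xS; rewrite -tS inE mem_head.
set D := \sum_(y in S) p y.
have D_gt0 : 0 < D.
  have [x0 x0S] : exists x0, x0 \in S by apply/set0Pn; rewrite -card_gt0 cardS.
  rewrite /D (bigD1 x0) //= ltr_pwDl //.
  by apply: sumr_ge0 => y _; apply: ltW.
transitivity (\sum_(x in S) p x / D); last by rewrite -mulr_suml divff ?gt_eqF.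
apply: eq_bigr => x xS.
have cardSx : #|S :\ x| = n by move: cardS; rewrite (cardsD1 x) xS => -[].
rewrite -[RHS]mulr1 -(IH _ cardSx) mulr_sumr.
rewrite (eq_bigl _ _ (fun t : n.-tuple T => uniq_cons_set_eq t xS)).
apply: eq_bigr => t /andP[ut /eqP tSx] /=; congr (_ / _ * _).
rewrite (sum_uniq_set ut tSx) /D [RHS](bigD1 x) //=; congr (_ + _).
by apply: eq_bigl => y; rewrite !inE andbC.
Qed.

End PlackettLuce.

Theorem corollary1 (R : realFieldType) (T : finType) (m : {set T} -> R)
  (B : {set T}) :
  is_bpa m ->
  (forall x : T, 0 < BetP m x) ->
  B != set0 ->
  \sum_(A : (#|B|).-tuple T | perm_event A && (Element A == B)) Sord m A = 1.
Proof.
move=> _ BetP_gt0 _.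
rewrite -(sum_plackett_luce BetP_gt0 (erefl #|B|)).
by apply: eq_bigr => t _; rewrite /Sord plackett_luceE.
Qed.
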